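(* Let $n\ge2$, $f\in C^n(\mathbb{R})$ and $\xi\in\mathbb{R}$. Let $2\le\kappa\le n$, let $\alpha=(\alpha_0,\dots,\alpha_\kappa)\in\mathbb{N}_{\ge0}^{\kappa+1}$ with $|\alpha|=\alpha_0+\dots+\alpha_\kappa\le n+1$, and let $(\lambda_0,\dots,\lambda_\kappa)\in\mathbb{R}^{\kappa+1}$ be such that for some $i\ne j$ we have $\lambda_i\ne\lambda_j$ and $\alpha_i,\alpha_j>0$. Then \begin{align*} f[\lambda_i^{(\alpha_i)},\lambda_j^{(\alpha_j)},\widetilde\lambda^{(\widetilde\alpha)}] =&\sum_{l=0}^{\alpha_i-1}\binom{\alpha_j+l-1}{l}\Big(\frac{\lambda_i-\xi}{\lambda_i-\lambda_j}\Big)^{\alpha_j}\Big(\frac{\xi-\lambda_j}{\lambda_i-\lambda_j}\Big)^{l} f[\lambda_i^{(\alpha_i-l)},\xi^{(\alpha_j+l)},\widetilde\lambda^{(\widetilde\alpha)}]\\ &+\sum_{l=0}^{\alpha_j-1}\binom{\alpha_i+l-1}{l}\Big(\frac{\lambda_i-\xi}{\lambda_i-\lambda_j}\Big)^{l}\Big(\frac{\xi-\lambda_j}{\lambda_i-\lambda_j}\Big)^{\alpha_i} f[\xi^{(\alpha_i+l)},\lambda_j^{(\alpha_j-l)},\widetilde\lambda^{(\widetilde\alpha)}], \end{align*} where $\widetilde\lambda^{(\widetilde\alpha)}$ denotes the list of the remaining variables $\lambda_m^{(\alpha_m)}$, $m\in\{0,\dots,\kappa\}\setminus\{i,j\}$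.
   Context: Divided differences: for $f\in C^n(\mathbb{R})$ set $f^{[0]}=f$ and for $1\le k\le n$, $f^{[k]}(\lambda_0,\lambda_1,\lambda)=\frac{f^{[k-1]}(\lambda_0,\lambda)-f^{[k-1]}(\lambda_1,\lambda)}{\lambda_0-\lambda_1}$ if $\lambda_0\ne\lambda_1$, and $=\frac{d}{d\mu}f^{[k-1]}(\mu,\lambda)|_{\mu=\lambda_0}$ if $\lambda_0=\lambda_1$ ($\lambda\in\mathbb{R}^{k-1}$); these are symmetric in their arguments. Notation with repeated variables: for reals $\mu_0,\dots,\mu_m$ and nonnegative integers $\beta_0,\dots,\beta_m$ with $N:=\beta_0+\dots+\beta_m\ge1$, $f[\mu_0^{(\beta_0)},\dots,\mu_m^{(\beta_m)}]:=f^{[N-1]}(\mu_0,\dots,\mu_0,\dots,\mu_m,\dots,\mu_m)$ where $\mu_r$ is repeated $\beta_r$ times (entries with multiplicity $0$ are omitted). *)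

From Stdlib Require Import Reals Lra Lia List.
From Coquelicot Require Import Coquelicot.
Import ListNotations.
Open Scope R_scope.

Definition Cn (n : nat) (f : R -> R) : Prop :=
  (forall (k : nat) (x : R), (k <= n)%nat -> ex_derive_n f k x) /\
  (forall x : R, continuous (Derive_n f n) x).

(* ddk f k [l0; l1; ...; lk] = f^{[k]}(l0,...,lk), following the recursive
   definition of the paper (recursion removes the second argument). *)
Fixpoint ddk (f : R -> R) (k : nat) (l : list R) : R :=
  match k with
  | O => f (hd 0 l)
  | S k' =>
      match l with
      | a :: b :: rest =>
          if Req_EM_T a b
          then Derive (fun mu => ddk f k' (mu :: rest)) a
          else (ddk f k' (a :: rest) - ddk f k' (b :: rest)) / (a - b)
      | _ => 0
      end
  end.

Definition dd (f : R -> R) (l : list R) : R := ddk f (length l - 1) l.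

Definition rest_list (kappa i j : nat) (lam : nat -> R) (alpha : nat -> nat) : list R :=
  flat_map (fun m => if (Nat.eqb m i || Nat.eqb m j)%bool then []
                     else repeat (lam m) (alpha m)) (seq 0 (S kappa)).

Definition abs_alpha (kappa : nat) (alpha : nat -> nat) : nat :=
  fold_right Nat.add 0%nat (map alpha (seq 0 (S kappa))).

(* First, divided differences of a C^n function are symmetric in
   their nodes: dropping the last node c turns f^{[k]} into (slope c f)^{[k-1]}, where
   slope c f y = f^{[1]}(y, c) = int_0^1 f'(c + s (y - c)) ds is C^p whenever f is C^(p+1);
   so an adjacent transposition of nodes reduces to the symmetry of the second divided
   difference of a differentiable function.
   Second, the defining recursion gives, for P <> Q and any list of nodes X,
     f[P, Q, X] = a f[P, xi, X] + b f[xi, Q, X],   a = (P - xi)/(P - Q),  b = (xi - Q)/(P - Q).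
   By symmetry, F(s, t) = f[P^(s), xi^(T-s-t), Q^(t), rest] then satisfies the lattice
   recursion F(s+1, t+1) = a F(s+1, t) + b F(s, t+1).  Unrolling it from
   (alpha_i, alpha_j), T = alpha_i + alpha_j, expresses F(alpha_i, alpha_j) through the
   boundary values F(s, 0) and F(0, t), each weighted by the lattice paths that first reach
   the boundary there; counting them gives the binomial coefficients. *)

From Stdlib Require Import Reals List Lra Lia Permutation FunctionalExtensionality.
From Coquelicot Require Import Coquelicot.
Import ListNotations.
Open Scope R_scope.

Definition slope (c : R) (g : R -> R) (y : R) : R := ddk g 1 [y; c].

Lemma slopeE c g y :
  slope c g y = if Req_EM_T y c then Derive g y else (g y - g c) / (y - c).
Proof. reflexivity. Qed.

Lemma ddk_cons2 f k a b l : ddk f (S k) (a :: b :: l) =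
  if Req_EM_T a b then Derive (fun mu => ddk f k (mu :: l)) a
  else (ddk f k (a :: l) - ddk f k (b :: l)) / (a - b).
Proof. reflexivity. Qed.

Lemma ddk_swap f k a b l : ddk f (S k) (a :: b :: l) = ddk f (S k) (b :: a :: l).
Proof.
  rewrite !ddk_cons2.
  destruct (Req_EM_T a b), (Req_EM_T b a); subst; try congruence.
  field; split; intro; lra.
Qed.

Lemma ddk_snoc m f l c :
  length l = S m -> ddk f (S m) (l ++ [c]) = ddk (slope c f) m l.
Proof.
  revert f l; induction m as [|m IH]; intros f l Hl.
  - destruct l as [|x [|? ?]]; try discriminate; reflexivity.
  - destruct l as [|a [|b l]]; try discriminate.
    change ((a :: b :: l) ++ [c]) with (a :: b :: (l ++ [c])).
    rewrite !ddk_cons2; destruct (Req_EM_T a b).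
    + apply Derive_ext; intro mu; apply (IH f (mu :: l)); simpl in *; lia.
    + now rewrite <- (IH f (a :: l)), <- (IH f (b :: l)) by (simpl in *; lia).
Qed.

Fixpoint slopes (l : list R) (f : R -> R) : R -> R :=
  match l with [] => f | c :: l' => slope c (slopes l' f) end.

Lemma ddk_app k f l l2 :
  length l = S k -> ddk f (k + length l2) (l ++ l2) = ddk (slopes l2 f) k l.
Proof.
  revert k l; induction l2 as [|c l2 IH]; intros k l Hl.
  - rewrite app_nil_r, Nat.add_0_r; reflexivity.
  - replace (k + length (c :: l2))%nat with (S k + length l2)%nat by (simpl; lia).
    replace (l ++ c :: l2) with ((l ++ [c]) ++ l2) by now rewrite <- app_assoc.
    rewrite IH by (rewrite length_app; simpl; lia).
    now apply ddk_snoc.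
Qed.

Lemma dd_app f l l2 :
  l <> [] -> dd f (l ++ l2) = ddk (slopes l2 f) (length l - 1) l.
Proof.
  intro Hl; unfold dd; rewrite <- ddk_app.
  - f_equal; rewrite length_app; destruct l; [congruence | simpl; lia].
  - destruct l; [congruence | simpl; lia].
Qed.

Lemma locally_neq (x y : R) : x <> y -> locally x (fun t => t <> y).
Proof.
  intro Hxy; destruct (Rdichotomy x y Hxy) as [H | H].
  - apply (filter_imp (fun t => t < y)); [intros; lra | now apply open_lt].
  - apply (filter_imp (fun t => y < t)); [intros; lra | now apply open_gt].
Qed.

Lemma Derive_slope g x y : x <> y -> ex_derive g x ->
  Derive (slope y g) x = (Derive g x * (x - y) - (g x - g y)) / (x - y) ^ 2.
Proof.
  intros Hxy Hg; apply is_derive_unique.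
  apply (is_derive_ext_loc (fun t => (g t - g y) / (t - y))).
  - apply (filter_imp (fun t => t <> y)); [|now apply locally_neq].
    intros t Ht; rewrite slopeE; destruct (Req_EM_T t y); congruence.
  - auto_derive; [split; [exact Hg | split; [lra | exact I]] |].
    change (Derive (fun t => g t) x) with (Derive g x); field; lra.
Qed.

Lemma slope_comm g x y : ex_derive g x -> ex_derive g y ->
  forall z, slope x (slope y g) z = slope y (slope x g) z.
Proof.
  intros Hx Hy z.
  destruct (Req_EM_T x y) as [<- | Hxy]; [reflexivity |].
  rewrite !(slopeE _ _ z).
  destruct (Req_EM_T z x) as [Ezx | Hzx]; destruct (Req_EM_T z y) as [Ezy | Hzy];
    try congruence; try subst z; rewrite ?Derive_slope by congruence; rewrite !slopeE;
    repeat match goal with |- context [Req_EM_T ?a ?b] => destruct (Req_EM_T a b) end;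
    try congruence; field; repeat split; intro; lra.
Qed.

Lemma dd_swap f l1 x y l2 :
  ex_derive (slopes l2 f) x -> ex_derive (slopes l2 f) y ->
  dd f (l1 ++ x :: y :: l2) = dd f (l1 ++ y :: x :: l2).
Proof.
  intros Hx Hy; destruct l1 as [|w l1].
  - unfold dd; apply ddk_swap.
  - change (dd f ((w :: l1) ++ [x; y] ++ l2) = dd f ((w :: l1) ++ [y; x] ++ l2)).
    rewrite !dd_app by discriminate.
    replace (slopes ([y; x] ++ l2) f) with (slopes ([x; y] ++ l2) f); [reflexivity |].
    apply functional_extensionality; intro z; symmetry; now apply slope_comm.
Qed.

Definition seg_moment (K : R -> R) (c : R) (m : nat) (y : R) : R :=
  RInt (fun s => s ^ m * K (c + s * (y - c))) 0 1.

Section SegMoment.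

Variables (K : R -> R) (c : R) (m : nat).
Hypothesis K_cont : forall x, continuous K x.

Lemma continuity_2d_pt_seg_integrand y s :
  continuity_2d_pt (fun y s => s ^ m * K (c + s * (y - c))) y s.
Proof.
  apply continuity_2d_pt_mult.
  - apply (continuity_1d_2d_pt_comp (fun s => s ^ m) (fun _ s => s)).
    + apply continuity_pt_filterlim, (ex_derive_continuous (fun s => s ^ m)).
      auto_derive; exact I.
    + apply continuity_2d_pt_id2.
  - apply (continuity_1d_2d_pt_comp K (fun y s => c + s * (y - c))).
    + apply continuity_pt_filterlim, K_cont.
    + apply continuity_2d_pt_plus; [apply continuity_2d_pt_const |].
      apply continuity_2d_pt_mult; [apply continuity_2d_pt_id2 |].
      apply continuity_2d_pt_minus; [apply continuity_2d_pt_id1 | apply continuity_2d_pt_const].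
Qed.

Lemma ex_RInt_seg_integrand y : ex_RInt (fun s => s ^ m * K (c + s * (y - c))) 0 1.
Proof.
  apply (ex_RInt_continuous (V := R_CompleteNormedModule)); intros s _.
  apply (continuous_mult (fun s => s ^ m) (fun s => K (c + s * (y - c)))).
  - apply (ex_derive_continuous (fun s => s ^ m)); auto_derive; exact I.
  - apply (continuous_comp (fun s => c + s * (y - c)) K); [|apply K_cont].
    apply (ex_derive_continuous (fun s => c + s * (y - c))); auto_derive; exact I.
Qed.

Lemma continuous_seg_moment y0 : continuous (seg_moment K c m) y0.
Proof.
  apply continuity_pt_filterlim; intros eps Heps.
  assert (Heps2 : 0 < eps / 2) by lra.
  destruct (uniform_continuity_2d_1d' (fun y s => s ^ m * K (c + s * (y - c))) 0 1 y0
              (fun s _ => continuity_2d_pt_seg_integrand y0 s) (mkposreal _ Heps2))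
    as [d Hd].
  exists d; split; [apply cond_pos |]; intros y [_ Hy]; simpl in Hy |- *.
  unfold R_dist, seg_moment in *.
  rewrite <- (RInt_minus (V := R_CompleteNormedModule)) by apply ex_RInt_seg_integrand.
  apply Rle_lt_trans with ((1 - 0) * (eps / 2)); [| lra].
  apply abs_RInt_le_const; [lra | |].
  - apply (ex_RInt_minus (V := R_CompleteNormedModule)); apply ex_RInt_seg_integrand.
  - intros s Hs; apply Rabs_def2 in Hy; pose proof (cond_pos d).
    left; apply (Hd s y0 s y); try lra.
    unfold Rminus; rewrite Rplus_opp_r, Rabs_R0; apply cond_pos.
Qed.

End SegMoment.

Lemma is_derive_seg_moment (h : R -> R) (c : R) (m : nat) :
  (forall x, ex_derive h x) -> (forall x, continuous (Derive h) x) ->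
  forall y, is_derive (seg_moment h c m) y (seg_moment (Derive h) c (S m) y).
Proof.
  intros h_der h'_cont y.
  assert (Dy : forall y s, Derive (fun z => s ^ m * h (c + s * (z - c))) y
                           = s ^ S m * Derive h (c + s * (y - c))).
  { intros y' s; apply is_derive_unique; auto_derive; [apply h_der |].
    change (Derive (fun x => h x)) with (Derive h).
    replace (y' + - c) with (y' - c) by ring; simpl; ring. }
  unfold seg_moment at 2; rewrite (RInt_ext _ _ _ _ (fun s _ => eq_sym (Dy y s))).
  apply (is_derive_RInt_param (fun y s => s ^ m * h (c + s * (y - c)))).
  - apply filter_forall; intros x s _; auto_derive; apply h_der.
  - intros s _; apply (continuity_2d_pt_ext (fun y s => s ^ S m * Derive h (c + s * (y - c)))).
    + intros; symmetry; apply Dy.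
    + now apply continuity_2d_pt_seg_integrand.
  - apply filter_forall; intro x; apply ex_RInt_seg_integrand.
    intro z; apply (ex_derive_continuous h), h_der.
Qed.

Lemma slope_seg_moment (g : R -> R) (c : R) :
  (forall x, ex_derive g x) -> (forall x, continuous (Derive g) x) ->
  forall y, slope c g y = seg_moment (Derive g) c 0 y.
Proof.
  intros g_der g'_cont y; unfold seg_moment.
  rewrite (RInt_ext _ (fun s => Derive g (c + s * (y - c)))) by (intros; simpl; ring).
  rewrite slopeE; destruct (Req_EM_T y c) as [-> | Hyc].
  - rewrite (RInt_ext _ (fun _ => Derive g c)) by (intros; f_equal; ring).
    rewrite RInt_const; simpl; unfold scal; simpl; unfold mult; simpl; ring.
  - assert (Hex : ex_RInt (fun s => Derive g (c + s * (y - c))) 0 1).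
    { apply (ex_RInt_continuous (V := R_CompleteNormedModule)); intros s _.
      apply (continuous_comp (fun s => c + s * (y - c)) (Derive g)); [| apply g'_cont].
      apply (ex_derive_continuous (fun s => c + s * (y - c))); auto_derive; exact I. }
    assert (Hlin : (y - c) * RInt (fun s => Derive g (c + s * (y - c))) 0 1
                   = RInt (Derive g) c y).
    { replace (RInt (Derive g) c y)
        with (RInt (Derive g) ((y - c) * 0 + c) ((y - c) * 1 + c)) by (f_equal; ring).
      rewrite <- (RInt_comp_lin (V := R_CompleteNormedModule)).
      - rewrite <- (RInt_scal (V := R_CompleteNormedModule)) by exact Hex.
        apply RInt_ext; intros s _; simpl; unfold scal; simpl; unfold mult; simpl.
        f_equal; f_equal; ring.
      - apply (ex_RInt_continuous (V := R_CompleteNormedModule)); intros; apply g'_cont. }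
    rewrite <- (RInt_Derive g c y), <- Hlin by auto; field; lra.
Qed.

Lemma Cn_continuous_Derive_n n g k x : Cn n g -> (k <= n)%nat -> continuous (Derive_n g k) x.
Proof.
  intros [g_der gn_cont] Hk.
  destruct (Nat.eq_dec k n) as [-> | Hne]; [apply gn_cont |].
  apply (ex_derive_continuous (Derive_n g k)), (g_der (S k)); lia.
Qed.

Lemma Derive_n_slope p g c k y : Cn (S p) g -> (k <= p)%nat ->
  Derive_n (slope c g) k y = seg_moment (Derive_n g (S k)) c k y.
Proof.
  intros Hg; revert y; induction k as [|k IH]; intros y Hk.
  - apply slope_seg_moment; intro x.
    + apply (proj1 Hg 1%nat); lia.
    + apply (Cn_continuous_Derive_n (S p) g 1); [exact Hg | lia].
  - simpl Derive_n at 1; rewrite (Derive_ext _ _ y (fun z => IH z ltac:(lia))).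
    apply is_derive_unique, is_derive_seg_moment; intro x.
    + apply (proj1 Hg (S (S k))); lia.
    + apply (Cn_continuous_Derive_n (S p) g (S (S k))); [exact Hg | lia].
Qed.

Lemma Cn_slope p g c : Cn (S p) g -> Cn p (slope c g).
Proof.
  intro Hg; split.
  - intros [|k] x Hk; [exact I |].
    apply (ex_derive_ext (seg_moment (Derive_n g (S k)) c k)).
    + intro y; symmetry; apply (Derive_n_slope p); [exact Hg | lia].
    + eexists; apply is_derive_seg_moment; intro z.
      * apply (proj1 Hg (S (S k))); lia.
      * apply (Cn_continuous_Derive_n (S p) g (S (S k))); [exact Hg | lia].
  - intro x; apply (continuous_ext (seg_moment (Derive_n g (S p)) c p)).
    + intro y; symmetry; now apply (Derive_n_slope p).
    + apply continuous_seg_moment, (proj2 Hg).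
Qed.

Lemma Cn_slopes n f l : Cn n f -> (length l <= n)%nat -> Cn (n - length l) (slopes l f).
Proof.
  intro Hf; induction l as [|c l IH]; intro Hl.
  - now rewrite Nat.sub_0_r.
  - simpl in Hl |- *; apply Cn_slope.
    replace (S (n - S (length l))) with (n - length l)%nat by lia; apply IH; lia.
Qed.

Lemma dd_Permutation n f l l' : Cn n f -> Permutation l l' -> (length l <= S n)%nat ->
  dd f l = dd f l'.
Proof.
  intros Hf Hll'; revert Hll'.
  apply (Permutation_ind_transp (fun l l' => (length l <= S n)%nat -> dd f l = dd f l')).
  - reflexivity.
  - intros x y l1 l2 Hlen; rewrite length_app in Hlen; simpl in Hlen.
    destruct (Cn_slopes n f l2 Hf ltac:(lia)) as [Hder _].
    apply dd_swap; apply (Hder 1%nat); lia.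
  - intros l0 l1 l2 P01 IH01 _ IH12 Hlen.
    rewrite IH01, IH12 by (rewrite <- ?(Permutation_length P01); exact Hlen); reflexivity.
Qed.

Lemma dd_cons2_neq f a b l : a <> b ->
  dd f (a :: b :: l) = (dd f (a :: l) - dd f (b :: l)) / (a - b).
Proof.
  intro Hab; unfold dd; simpl length.
  replace (S (S (length l)) - 1)%nat with (S (length l)) by lia.
  replace (S (length l) - 1)%nat with (length l) by lia.
  rewrite ddk_cons2; destruct (Req_EM_T a b); [congruence | reflexivity].
Qed.

Lemma dd_three_point f P Q xi l : P <> Q ->
  dd f (P :: Q :: l) =
  (P - xi) / (P - Q) * dd f (P :: xi :: l) + (xi - Q) / (P - Q) * dd f (xi :: Q :: l).
Proof.
  intro HPQ.
  destruct (Req_EM_T xi P) as [-> | HP]; [field; lra |].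
  destruct (Req_EM_T xi Q) as [-> | HQ]; [field; lra |].
  rewrite !dd_cons2_neq by congruence; field; repeat split; intro; lra.
Qed.

(* The xi-block sits between the P- and Q-blocks so that F(s, 0) and F(0, t) are
   literally the lists of the theorem; [T - s - t] truncates, so only s + t <= T matters. *)
Definition dd_grid (f : R -> R) (P Q xi : R) (rest : list R) (T s t : nat) : R :=
  dd f (repeat P s ++ repeat xi (T - s - t) ++ repeat Q t ++ rest).

Lemma Permutation_to_front {A} (l1 l2 : list A) x : Permutation (l1 ++ x :: l2) (x :: l1 ++ l2).
Proof. symmetry; apply Permutation_middle. Qed.

Lemma dd_grid_rec n f P Q xi rest T s t : Cn n f -> P <> Q ->
  (T + length rest <= S n)%nat -> (S s + S t <= T)%nat ->
  dd_grid f P Q xi rest T (S s) (S t) =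
  (P - xi) / (P - Q) * dd_grid f P Q xi rest T (S s) t
  + (xi - Q) / (P - Q) * dd_grid f P Q xi rest T s (S t).
Proof.
  intros Hf HPQ Hlen Hst; unfold dd_grid.
  set (u := (T - S s - S t)%nat).
  replace (T - S s - t)%nat with (S u) by (unfold u; lia).
  replace (T - s - S t)%nat with (S u) by (unfold u; lia).
  set (X := repeat P s ++ repeat xi u ++ repeat Q t ++ rest).
  assert (HX : (length X + 2 <= S n)%nat)
    by (unfold X; rewrite !length_app, !repeat_length; unfold u; lia).
  assert (Hperm : forall x y l, Permutation l (x :: y :: X) -> dd f l = dd f (x :: y :: X)).
  { intros x y l Hl; apply (dd_Permutation n f _ _ Hf Hl).
    rewrite (Permutation_length Hl); simpl; lia. }
  rewrite (Hperm P Q (repeat P (S s) ++ repeat xi u ++ repeat Q (S t) ++ rest)),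
    (Hperm P xi (repeat P (S s) ++ repeat xi (S u) ++ repeat Q t ++ rest)),
    (Hperm xi Q (repeat P s ++ repeat xi (S u) ++ repeat Q (S t) ++ rest)).
  - apply dd_three_point, HPQ.
  - simpl; rewrite Permutation_to_front; apply perm_skip.
    rewrite app_assoc, Permutation_to_front, <- app_assoc; reflexivity.
  - simpl; apply perm_skip, Permutation_to_front.
  - simpl; apply perm_skip.
    rewrite app_assoc, Permutation_to_front, <- app_assoc; reflexivity.
Qed.

(* [Binomial.C n k] is not 0 for k > n, whereas [path_sum_rec] and [path_sum_0_r] need
   these zeros. *)
Fixpoint binom (n k : nat) : nat :=
  match n, k with
  | _, O => 1
  | O, S _ => 0
  | S n', S k' => binom n' k' + binom n' (S k')
  end.

Lemma binom_small n k : (n < k)%nat -> binom n k = 0%nat.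
Proof.
  revert k; induction n as [|n IH]; intros [|k] Hk; try lia; [reflexivity |].
  simpl; rewrite !IH by lia; reflexivity.
Qed.

Lemma C_binom n k : (k <= n)%nat -> Binomial.C n k = INR (binom n k).
Proof.
  revert k; induction n as [|n IH]; intros [|k] Hk; try lia.
  - apply C_n_0.
  - apply C_n_0.
  - simpl binom; rewrite plus_INR.
    destruct (Nat.eq_dec k n) as [-> | Hne].
    + rewrite (binom_small n (S n)), <- IH, !C_n_n by lia; simpl; ring.
    + rewrite <- !IH, pascal by lia; reflexivity.
Qed.

Lemma binom_0_r n : binom n 0 = 1%nat.
Proof. now destruct n. Qed.

(* The sum over l < m; unlike [sum_n], it is empty for m = 0. *)
Fixpoint sum_lt (g : nat -> R) (m : nat) : R :=
  match m with O => 0 | S m' => sum_lt g m' + g m' end.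

Lemma sum_lt_succ_l g m : sum_lt g (S m) = g O + sum_lt (fun l => g (S l)) m.
Proof. induction m as [|m IH]; simpl in *; [| rewrite IH]; ring. Qed.

Lemma sum_lt_ext g h m : (forall l, (l < m)%nat -> g l = h l) -> sum_lt g m = sum_lt h m.
Proof.
  induction m as [|m IH]; intro Hgh; simpl; [reflexivity |].
  rewrite IH, Hgh; [reflexivity | lia |]; intros; apply Hgh; lia.
Qed.

Lemma sum_lt_lin a b g h m :
  a * sum_lt g m + b * sum_lt h m = sum_lt (fun l => a * g l + b * h l) m.
Proof. induction m as [|m IH]; simpl; [| rewrite <- IH]; ring. Qed.

Lemma sum_lt_zero g m : (forall l, (l < m)%nat -> g l = 0) -> sum_lt g m = 0.
Proof.
  induction m as [|m IH]; intro Hg; simpl; [reflexivity |].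
  rewrite IH, Hg; [ring | lia | intros; apply Hg; lia].
Qed.

Lemma sum_n_sum_lt g m : sum_n g m = sum_lt g (S m).
Proof.
  induction m as [|m IH]; [rewrite sum_O; symmetry; apply Rplus_0_l |].
  rewrite sum_Sn, IH; reflexivity.
Qed.

(* A path from (s, t) that first meets the axis t = 0 at (s - l, 0) makes t steps of
   weight a and l of weight b, the last one of weight a: C(t + l - 1, l) such paths. *)
Definition path_sum (a b : R) (B : nat -> R) (s t : nat) : R :=
  sum_lt (fun l => INR (binom (t + l - 1) l) * a ^ t * b ^ l * B (s - l)%nat) s.

Lemma path_sum_0_r a b B s : path_sum a b B (S s) 0 = B (S s).
Proof.
  unfold path_sum; rewrite sum_lt_succ_l, sum_lt_zero; [simpl; ring |].
  intros l _; rewrite binom_small by lia; simpl; ring.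
Qed.

Lemma path_sum_rec a b B s t :
  path_sum a b B (S s) (S t) = a * path_sum a b B (S s) t + b * path_sum a b B s (S t).
Proof.
  unfold path_sum; rewrite !(sum_lt_succ_l _ s), Rmult_plus_distr_l, Rplus_assoc.
  f_equal.
  - replace (S t + 0 - 1)%nat with t by lia; rewrite Nat.add_0_r.
    rewrite !binom_0_r; simpl; ring.
  - rewrite (sum_lt_lin a b); apply sum_lt_ext; intros l _.
    replace (S t + S l - 1)%nat with (S (t + l)) by lia.
    replace (t + S l - 1)%nat with (t + l)%nat by lia.
    replace (S t + l - 1)%nat with (t + l)%nat by lia.
    simpl binom; rewrite plus_INR; simpl; ring.
Qed.

Lemma lattice_recursion_solution (F : nat -> nat -> R) (T : nat) (a b : R) :
  (forall s t, (S s + S t <= T)%nat -> F (S s) (S t) = a * F (S s) t + b * F s (S t)) ->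
  forall s t, (1 <= s + t <= T)%nat ->
  F s t = path_sum a b (fun i => F i O) s t + path_sum b a (fun j => F O j) t s.
Proof.
  intros HF s t; remember (s + t)%nat as N eqn:HN; revert s t HN.
  induction N as [|N IH]; intros s t HN HT; [lia |].
  destruct s as [|s], t as [|t]; try lia.
  - rewrite path_sum_0_r; unfold path_sum; simpl; ring.
  - rewrite path_sum_0_r; unfold path_sum; simpl; ring.
  - rewrite HF, path_sum_rec, (path_sum_rec b a), (IH (S s) t), (IH s (S t)) by lia; ring.
Qed.

Lemma path_sum_sum_n a b B s t : (1 <= s)%nat -> (1 <= t)%nat ->
  path_sum a b B s t =
  sum_n (fun l => Binomial.C (t + l - 1) l * a ^ t * b ^ l * B (s - l)%nat) (s - 1).
Proof.
  intros Hs Ht; rewrite sum_n_sum_lt; replace (S (s - 1)) with s by lia.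
  apply sum_lt_ext; intros l _; now rewrite C_binom by lia.
Qed.

Lemma length_flat_map_skip2 (i j : nat) (lam : nat -> R) (alpha : nat -> nat) L : i <> j ->
  (length (flat_map (fun m => if (Nat.eqb m i || Nat.eqb m j)%bool then []
                             else repeat (lam m) (alpha m)) L)
   + count_occ Nat.eq_dec L i * alpha i + count_occ Nat.eq_dec L j * alpha j
   = fold_right Nat.add 0 (map alpha L))%nat.
Proof.
  intro Hij; induction L as [|m L IH]; simpl; [reflexivity |].
  rewrite length_app.
  destruct (Nat.eq_dec m i), (Nat.eq_dec m j), (Nat.eqb_spec m i), (Nat.eqb_spec m j);
    subst; simpl; rewrite ?repeat_length; try congruence; lia.
Qed.

Lemma rest_list_length kappa i j lam alpha :
  (i <= kappa)%nat -> (j <= kappa)%nat -> i <> j ->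
  (length (rest_list kappa i j lam alpha) + alpha i + alpha j = abs_alpha kappa alpha)%nat.
Proof.
  intros Hi Hj Hij; unfold rest_list, abs_alpha.
  rewrite <- (length_flat_map_skip2 i j lam alpha _ Hij).
  pose proof (proj1 (NoDup_count_occ' Nat.eq_dec _) (seq_NoDup (S kappa) 0)) as Hcount.
  rewrite !Hcount by (apply in_seq; lia); lia.
Qed.

Theorem lemma3p1 (n : nat) (f : R -> R) (xi : R) (kappa : nat)
  (alpha : nat -> nat) (lam : nat -> R) (i j : nat) :
  (2 <= n)%nat -> Cn n f ->
  (2 <= kappa)%nat -> (kappa <= n)%nat ->
  (abs_alpha kappa alpha <= S n)%nat ->
  (i <= kappa)%nat -> (j <= kappa)%nat -> i <> j ->
  lam i <> lam j -> (0 < alpha i)%nat -> (0 < alpha j)%nat ->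
  let rst := rest_list kappa i j lam alpha in
  let a := (lam i - xi) / (lam i - lam j) in
  let b := (xi - lam j) / (lam i - lam j) in
  dd f (repeat (lam i) (alpha i) ++ repeat (lam j) (alpha j) ++ rst)
  = sum_n (fun l => Binomial.C (alpha j + l - 1)%nat l * a ^ (alpha j) * b ^ l *
             dd f (repeat (lam i) (alpha i - l)%nat ++ repeat xi (alpha j + l)%nat ++ rst))
          (alpha i - 1)%nat
  + sum_n (fun l => Binomial.C (alpha i + l - 1)%nat l * a ^ l * b ^ (alpha i) *
             dd f (repeat xi (alpha i + l)%nat ++ repeat (lam j) (alpha j - l)%nat ++ rst))
          (alpha j - 1)%nat.
Proof.
  intros _ Hf _ _ Habs Hi Hj Hij Hlam Hai Haj rst a b.
  pose proof (rest_list_length kappa i j lam alpha Hi Hj Hij) as Hrst; fold rst in Hrst.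
  set (T := (alpha i + alpha j)%nat).
  set (F := dd_grid f (lam i) (lam j) xi rst T).
  assert (HF : F (alpha i) (alpha j) =
               dd f (repeat (lam i) (alpha i) ++ repeat (lam j) (alpha j) ++ rst))
    by (unfold F, dd_grid; now replace (T - alpha i - alpha j)%nat with 0%nat by lia).
  rewrite <- HF, (lattice_recursion_solution F T a b);
    [| intros s t Hst; apply (dd_grid_rec n); auto; lia | lia].
  rewrite !path_sum_sum_n by lia.
  f_equal; apply sum_n_ext_loc; intros l Hl; unfold F, dd_grid.
  - replace (T - (alpha i - l) - 0)%nat with (alpha j + l)%nat by lia; reflexivity.
  - replace (T - 0 - (alpha j - l))%nat with (alpha i + l)%nat by lia; simpl; ring.
Qed.
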